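(* Let $D' \in \mathrm{Sym}_n(\mathbb{R}_{\geq 0})$ and let $D^A$ be the all pairs shortest path matrix of the complete weighted graph $K_n(D')$, i.e. $D^A_{ij}$ is the minimum total weight of a path from $i$ to $j$ in $K_n(D')$. Then the perturbation $P^A := D^A - D'$ is a sparsest possible decrease only metric repair solution for $D'$; that is, $P^A \preceq 0$, $D'+P^A$ is metric, and every $P \preceq 0$ with $D'+P$ metric satisfies $\|P^A\|_0 \leq \|P\|_0$. *)

From HB Require Import structures.
From mathcomp Require Import all_boot all_order all_algebra.
Set Implicit Arguments. Unset Strict Implicit. Unset Printing Implicit Defensive.
Import Order.TTheory GRing.Theory Num.Theory.
Local Open Scope ring_scope.

Definition sym_nonneg (R : realFieldType) (n : nat) (D : 'M[R]_n) : Prop :=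
  (forall i j, D i j = D j i) /\ (forall i j, 0 <= D i j).

(* A (semi)metric matrix: zero diagonal, symmetric, triangle inequality
   (nonnegativity follows). *)
Definition is_metric (R : realFieldType) (n : nat) (D : 'M[R]_n) : Prop :=
  [/\ forall i, D i i = 0,
      forall i j, D i j = D j i &
      forall i j k, D i k <= D i j + D j k].

Definition is_path (n : nat) (i j : 'I_n) (p : seq 'I_n) : bool :=
  uniq (i :: p) && (last i p == j).

Definition path_weight (R : realFieldType) (n : nat) (D : 'M[R]_n)
  (i : 'I_n) (p : seq 'I_n) : R :=
  \sum_(e <- zip (i :: p) p) D e.1 e.2.

Definition is_apsp (R : realFieldType) (n : nat) (D DA : 'M[R]_n) : Prop :=
  forall i j,
    (exists2 p, is_path i j p & path_weight D i p = DA i j) /\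
    (forall p, is_path i j p -> DA i j <= path_weight D i p).

Definition mx_nonpos (R : realFieldType) (n : nat) (P : 'M[R]_n) : Prop :=
  forall i j, P i j <= 0.

Definition norm0 (R : realFieldType) (n : nat) (P : 'M[R]_n) : nat :=
  #|[set ij : 'I_n * 'I_n | P ij.1 ij.2 != 0]|.

From HB Require Import structures.
From mathcomp Require Import all_boot all_order all_algebra.
Import Order.TTheory GRing.Theory Num.Theory.
Local Open Scope ring_scope.

(* A single edge is a path, so D^A <= D' and P^A <= 0.  Gluing
   and reversing walks make D^A a metric, once one knows that every walk can
   be shortened to a path without increasing its weight (D' >= 0).  Conversely
   every metric M <= D' satisfies M <= D^A, by the triangle inequality along a
   shortest path.  So if D' + P is metric with P <= 0 and P_ij = 0, then
   D'_ij <= D^A_ij <= D'_ij, i.e. P^A_ij = 0: the support of P^A is contained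
   in that of P. *)

Lemma last_rev_belast (T : Type) (x : T) s : last (last x s) (rev (belast x s)) = x.
Proof. by rewrite -[RHS](last_rcons x (rev s) x) -rev_cons lastI rev_rcons. Qed.

Section PathWeight.
Context {R : realFieldType} {n : nat}.
Implicit Types (D M : 'M[R]_n) (i j x : 'I_n) (p q : seq 'I_n).

Lemma path_weight_nil D i : path_weight D i [::] = 0.
Proof. by rewrite /path_weight big_nil. Qed.

Lemma path_weight_cons D i x p :
  path_weight D i (x :: p) = D i x + path_weight D x p.
Proof. by rewrite /path_weight big_cons. Qed.

Lemma path_weight_cat D i p q :
  path_weight D i (p ++ q) = path_weight D i p + path_weight D (last i p) q.
Proof.
elim: p i => [|x p IHp] i /=; first by rewrite path_weight_nil add0r.
by rewrite !path_weight_cons IHp addrA.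
Qed.

Lemma path_weight_rcons D i p x :
  path_weight D i (rcons p x) = path_weight D i p + D (last i p) x.
Proof. by rewrite -cats1 path_weight_cat path_weight_cons path_weight_nil addr0. Qed.

Lemma ler_path_weight {D M} i p :
  (forall j k, M j k <= D j k) -> path_weight M i p <= path_weight D i p.
Proof. by move=> leMD; apply: ler_sum => e _. Qed.

Lemma path_weight_ge0 {D} i p :
  (forall j k, 0 <= D j k) -> 0 <= path_weight D i p.
Proof. by move=> D_ge0; apply: sumr_ge0 => e _. Qed.

Lemma path_weight_rev {D} i p : (forall j k, D j k = D k j) ->
  path_weight D (last i p) (rev (belast i p)) = path_weight D i p.
Proof.
move=> Dsym; elim: p i => [|x p IHp] i //=.
by rewrite rev_cons path_weight_rcons IHp last_rev_belast path_weight_cons addrC Dsym.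
Qed.

Lemma metric_le_path_weight {M} i p :
  is_metric M -> M i (last i p) <= path_weight M i p.
Proof.
case=> M0 _ Mtri; elim: p i => [|x p IHp] i /=.
  by rewrite M0 path_weight_nil.
by rewrite path_weight_cons (le_trans (Mtri _ x _)) ?lerD2l.
Qed.

Lemma is_path_suffix x i j p q : is_path x j (p ++ i :: q) -> is_path i j q.
Proof.
by rewrite /is_path -cat_cons cat_uniq last_cat => /andP [/and3P [_ _ ->]].
Qed.

Lemma is_path_cons i x j p : i \notin x :: p -> is_path x j p -> is_path i j (x :: p).
Proof. by rewrite /is_path /= => -> /andP [-> ->]. Qed.

Lemma walk_shortening {D} i p : (forall j k, 0 <= D j k) ->
  exists2 q, is_path i (last i p) q & path_weight D i q <= path_weight D i p.
Proof.
move=> D_ge0; elim: p i => [|x p IHp] i.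
  by exists [::]; rewrite /is_path /=.
have [q x_q le_q] := IHp x; rewrite /= path_weight_cons.
have [eq_ix|neq_ix] := eqVneq i x.
  by subst x; exists q => //; rewrite (le_trans le_q) ?lerDr.
have [i_q|niq] := boolP (i \in q).
  case/splitPr: i_q x_q le_q => a b x_ab le_ab.
  exists b; first exact: is_path_suffix x_ab.
  have le_b : path_weight D i b <= path_weight D x (a ++ i :: b).
    by rewrite path_weight_cat path_weight_cons addrA lerDr addr_ge0 ?path_weight_ge0.
  by rewrite (le_trans le_b) // (le_trans le_ab) ?lerDr.
exists (x :: q); last by rewrite path_weight_cons lerD2l.
by apply: is_path_cons x_q; rewrite inE negb_or neq_ix.
Qed.

End PathWeight.

Section AllPairsShortestPaths.
Context {R : realFieldType} {n : nat} {D DA : 'M[R]_n}.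
Hypotheses (D_symnn : sym_nonneg D) (DA_apsp : is_apsp D DA).
Implicit Types (M : 'M[R]_n) (i j k : 'I_n) (p : seq 'I_n).

Lemma apsp_le_walk i p : DA i (last i p) <= path_weight D i p.
Proof.
have [q i_q le_q] := walk_shortening i p D_symnn.2.
exact: le_trans (proj2 (DA_apsp _ _) q i_q) le_q.
Qed.

Lemma apsp_walk i j : exists2 p, last i p = j & path_weight D i p = DA i j.
Proof. by have [[p /andP [_ /eqP]]] := DA_apsp i j; exists p. Qed.

Lemma apsp_le i j : DA i j <= D i j.
Proof. by have := apsp_le_walk i [:: j]; rewrite path_weight_cons path_weight_nil addr0. Qed.

Lemma apsp_diag i : DA i i = 0.
Proof.
apply/eqP; rewrite eq_le; apply/andP; split.
  by have := apsp_le_walk i [::]; rewrite path_weight_nil.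
by have [p _ <-] := apsp_walk i i; apply: path_weight_ge0 D_symnn.2.
Qed.

Lemma apsp_sym i j : DA i j = DA j i.
Proof.
have le_rev a b : DA b a <= DA a b.
  have [p <- <-] := apsp_walk a b.
  rewrite -(path_weight_rev a p D_symnn.1).
  by have := apsp_le_walk (last a p) (rev (belast a p)); rewrite last_rev_belast.
by apply/eqP; rewrite eq_le !le_rev.
Qed.

Lemma apsp_triangle i j k : DA i k <= DA i j + DA j k.
Proof.
have [p <- <-] := apsp_walk i j; have [q <- <-] := apsp_walk (last i p) k.
by rewrite -path_weight_cat -[X in DA _ X]last_cat apsp_le_walk.
Qed.

Lemma apsp_metric : is_metric DA.
Proof. by split; [exact: apsp_diag | exact: apsp_sym | exact: apsp_triangle]. Qed.

Lemma metric_le_apsp {M} : is_metric M -> (forall i j, M i j <= D i j) ->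
  forall i j, M i j <= DA i j.
Proof.
move=> M_metric leMD i j; have [p <- <-] := apsp_walk i j.
exact: le_trans (metric_le_path_weight i p M_metric) (ler_path_weight i p leMD).
Qed.

Lemma apsp_eq_where_repair_vanishes {P i j} :
  mx_nonpos P -> is_metric (D + P) -> P i j = 0 -> DA i j = D i j.
Proof.
move=> P_le0 DP_metric Pij0; apply/eqP; rewrite eq_le apsp_le /=.
have le_DP a b : (D + P) a b <= D a b by rewrite mxE gerDl P_le0.
by have := metric_le_apsp DP_metric le_DP i j; rewrite mxE Pij0 addr0.
Qed.

End AllPairsShortestPaths.

Theorem mainTheorem1 (R : realFieldType) (n : nat) (D' DA : 'M[R]_n) :
  sym_nonneg D' -> is_apsp D' DA ->
  let PA := DA - D' in
  [/\ mx_nonpos PA,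
      is_metric (D' + PA) &
      forall P : 'M[R]_n, mx_nonpos P -> is_metric (D' + P) ->
        (norm0 PA <= norm0 P)%N].
Proof.
move=> D'_symnn DA_apsp PA.
have -> : D' + PA = DA by rewrite /PA addrC subrK.
split=> [i j | | P P_le0 D'P_metric].
- by rewrite !mxE subr_le0 (apsp_le D'_symnn DA_apsp).
- exact: apsp_metric D'_symnn DA_apsp.
apply: subset_leq_card; apply/subsetP => -[i j]; rewrite !inE /=.
apply: contraNN => /eqP Pij0; rewrite !mxE subr_eq0.
by rewrite (apsp_eq_where_repair_vanishes D'_symnn DA_apsp P_le0 D'P_metric Pij0).
Qed.
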